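(* For every positive integer $x$, $R(x)=1$ if and only if $M(x)\in\mathcal{N}$.
   Context: For a positive integer $x$, write $x=2^{k}x'$ with $x'$ odd, and define the reduced Collatz function $R(x)=(3x'+1)/2^{v}$, where $2^{v}$ is the largest power of $2$ dividing $3x'+1$ (so $R(x)=R(2^n x)$ for all $n\ge 0$). Define $M(x)=2^{-m}x$, where $m$ is the smallest natural number with $x<2^m$; thus $M(x)\in[1/2,1)$. For $n\ge 0$ let $y^*_n=(0.1\{01\}^n)_2$ in binary, where $\{01\}^n$ denotes $n$ consecutive repetitions of the block $01$ (so $y^*_0=1/2$, $y^*_1=5/8$, \dots), and let $\mathcal{N}=\{y^*_n:n\ge 0\}$. *)

From mathcomp Require Import all_boot all_order all_algebra.
Set Implicit Arguments. Unset Strict Implicit. Unset Printing Implicit Defensive.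
Import Order.TTheory GRing.Theory Num.Theory.

Definition oddpart (x : nat) : nat := x %/ 2 ^ logn 2 x.

Definition Rcol (x : nat) : nat :=
  let y := 3 * oddpart x + 1 in y %/ 2 ^ logn 2 y.

Lemma exists_pow2_gt (x : nat) : exists m, x < 2 ^ m.
Proof. by exists x; apply: ltn_expl. Qed.

Definition mexp (x : nat) : nat := ex_minn (exists_pow2_gt x).

Local Open Scope ring_scope.

Definition Mscale (x : nat) : rat := x%:R / (2 ^ mexp x)%N%:R.

(* y*_n = (0.1{01}^n)_2 = sum_{k=0}^n 2^{-(2k+1)} *)
Definition ystar (n : nat) : rat := \sum_(k < n.+1) (2%:R ^- (2 * k + 1)%N).

Definition inN (y : rat) : Prop := exists n : nat, y = ystar n.

From mathcomp Require Import all_boot all_order all_algebra.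
From mathcomp Require Import zify ring.
Set Implicit Arguments. Unset Strict Implicit. Unset Printing Implicit Defensive.
Import Order.TTheory GRing.Theory Num.Theory.

(** Write [x = 2^k a] with [a] odd.  Since [R(x) = R(a)] and [M(x) = M(a)],
   only [a] matters.  [R(a) = 1] means [3a + 1 = 2^v]; as [2^v = 1 (mod 3)]
   forces [v] even and [a > 0] forces [v > 0], this says
   [3a + 1 = 4^(n+1)] for some [n].  Then [4^n <= a < 2 4^n], so
   [M(a) = a / 2^(2n+1) = (4^(n+1) - 1) / (3 2^(2n+1)) = y*_n].  Conversely
   [M(a) = y*_n] gives [3a 2^(2n+1) = (4^(n+1) - 1) 2^m], and comparing the
   odd parts of both sides yields [3a + 1 = 4^(n+1)]. *)

Lemma oddpartK x : 0 < x -> oddpart x * 2 ^ logn 2 x = x.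
Proof. by move=> x_gt0; rewrite divnK // pfactor_dvdn. Qed.

Lemma odd_oddpart x : 0 < x -> odd (oddpart x).
Proof.
move=> x_gt0; have [a a_odd xE] := pfactor_coprime (isT : prime 2) x_gt0.
by rewrite /oddpart {1}xE mulnK ?expn_gt0 // -coprime2n.
Qed.

Lemma oddpart_odd_mul_exp2 a k : odd a -> oddpart (a * 2 ^ k) = a.
Proof.
move=> a_odd; have a_gt0 := odd_gt0 a_odd.
rewrite /oddpart lognM ?expn_gt0 // logn_coprime ?coprime2n //.
by rewrite pfactorK // mulnK // expn_gt0.
Qed.

Lemma oddpart_eq1 y : 0 < y -> oddpart y = 1 <-> exists v, y = 2 ^ v.
Proof.
move=> y_gt0; split=> [oddpart1 | [v ->]].
  by exists (logn 2 y); rewrite -{1}(oddpartK y_gt0) oddpart1 mul1n.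
by rewrite -[2 ^ v]mul1n oddpart_odd_mul_exp2.
Qed.

Lemma expn2_mod3 v : 2 ^ v = (if odd v then 2 else 1) %[mod 3].
Proof. by elim: v => // v IH; rewrite expnS -modnMmr IH /=; case: (odd v). Qed.

Lemma Rcol_eq1 x : 0 < x -> Rcol x = 1 <-> exists n, 3 * oddpart x + 1 = 4 ^ n.+1.
Proof.
move=> x_gt0; have a_gt0 := odd_gt0 (odd_oddpart x_gt0).
change (Rcol x) with (oddpart (3 * oddpart x + 1)).
rewrite oddpart_eq1 ?addn_gt0 ?orbT //.
split=> [[v vE] | [n ->]]; last by exists (2 * n.+1); rewrite expnM.
have v_even : odd v = false.
  by have := expn2_mod3 v; rewrite -vE [3 * _]mulnC modnMDl; case: (odd v).
have v_gt0 : 0 < v by case: v vE {v_even} => //=; lia.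
exists v./2.-1; rewrite vE -[4]/(2 ^ 2) -expnM; congr (2 ^ _).
by rewrite -[v in LHS]odd_double_half v_even -mul2n prednK // half_gt0; lia.
Qed.

Lemma mexpE x : 0 < x -> mexp x = (trunc_log 2 x).+1.
Proof.
move=> x_gt0; rewrite /mexp; case: ex_minnP => m x_lt min_m.
apply/anti_leq; rewrite min_m ?trunc_log_ltn //=.
by rewrite -(ltn_exp2l _ _ (isT : 1 < 2)) (leq_ltn_trans (trunc_logP _ _)).
Qed.

Lemma mexp_mul_exp2 x k : 0 < x -> mexp (x * 2 ^ k) = mexp x + k.
Proof.
move=> x_gt0; elim: k => [|k IH]; first by rewrite muln1 addn0.
have xk_gt0 : 0 < x * 2 ^ k by rewrite muln_gt0 x_gt0 expn_gt0.
rewrite expnS mulnCA mexpE; last by rewrite muln_gt0 xk_gt0.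
by rewrite trunc_logMp // -mexpE // IH addnS.
Qed.

Section Scaling.
Local Open Scope ring_scope.

Lemma Mscale_mul_exp2 x k : (0 < x)%N -> Mscale (x * 2 ^ k) = Mscale x.
Proof.
move=> x_gt0; rewrite /Mscale mexp_mul_exp2 // expnD !natrM.
by rewrite invfM mulrACA divff ?mulr1 // pnatr_eq0 expn_eq0.
Qed.

Lemma ystarE n : ystar n = (4 ^+ n.+1 - 1) / (3 * 2 ^+ (2 * n + 1)).
Proof.
rewrite /ystar; elim: n => [|n IH]; first by rewrite big_ord1.
rewrite big_ord_recr /= IH.
have four : 4 = 2 ^+ 2 :> rat by rewrite -natrX.
have -> : (2 * n.+1 + 1 = (2 * n + 1) + 2)%N by lia.
have -> : 4 ^+ n.+2 = 2 ^+ (2 * n + 1) * 2 ^+ 3 :> rat.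
  by rewrite four -exprM -exprD; congr (_ ^+ _); lia.
have -> : 4 ^+ n.+1 = 2 ^+ (2 * n + 1) * 2 :> rat.
  by rewrite four -exprM -exprSr; congr (_ ^+ _); lia.
have : 2 ^+ (2 * n + 1) != 0 :> rat by rewrite expf_eq0 pnatr_eq0 andbF.
rewrite (exprD _ (2 * n + 1) 2).
by move: (2 ^+ _) => t t_neq0; field; rewrite t_neq0.
Qed.

Lemma Mscale_ystar x n : Mscale x = ystar n <->
  (x * (3 * 2 ^ (2 * n + 1)) = (4 ^ n.+1 - 1) * 2 ^ mexp x)%N.
Proof.
have -> : ystar n = (4 ^ n.+1 - 1)%N%:R / (3 * 2 ^ (2 * n + 1))%N%:R.
  by rewrite ystarE natrB ?expn_gt0 // natrM !natrX.
apply: (iff_trans (rwP eqP)); rewrite /Mscale.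
rewrite eqr_div ?pnatr_eq0 ?muln_eq0 ?expn_eq0 // -!natrM eqr_nat.
by split=> /eqP.
Qed.

End Scaling.

Lemma Mscale_odd_ystar a n : odd a -> Mscale a = ystar n <-> 3 * a + 1 = 4 ^ n.+1.
Proof.
move=> a_odd; have pow4_gt0 : 0 < 4 ^ n by rewrite expn_gt0.
rewrite Mscale_ystar; split=> [scaleE | aE].
  have pow4_pred_odd : odd (4 ^ n.+1 - 1) by rewrite subn1 expnS; lia.
  have : 3 * a = 4 ^ n.+1 - 1.
    rewrite -(oddpart_odd_mul_exp2 (2 * n + 1) (_ : odd (3 * a))) ?oddM ?a_odd //.
    by rewrite -(oddpart_odd_mul_exp2 (mexp a) pow4_pred_odd) -scaleE mulnCA mulnA.
  by rewrite expnS; lia.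
have -> : mexp a = 2 * n + 1.
  rewrite mexpE ?odd_gt0 // addn1; congr _.+1; apply: trunc_log_eq => //.
  by rewrite expnSr expnM -[2 ^ 2]/4; move: aE; rewrite expnS; lia.
by rewrite -aE addnK mulnCA mulnA.
Qed.

Theorem mainTheorem2 (x : nat) : 0 < x -> (Rcol x = 1 <-> inN (Mscale x)).
Proof.
move=> x_gt0; have a_odd := odd_oddpart x_gt0.
have -> : Mscale x = Mscale (oddpart x).
  by rewrite -{1}(oddpartK x_gt0) Mscale_mul_exp2 // odd_gt0.
rewrite Rcol_eq1 //.
by split=> -[n /(Mscale_odd_ystar n a_odd) scaleE]; exists n.
Qed.
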